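(* Let $(X,\mathcal{A},\mu)$ be a probability space, $\theta$ a measure-preserving endomorphism and $A\subset X$ a hole. Then the map $\varphi\mapsto\rho(A,\varphi)$, defined on the set of bounded ceiling functions $\varphi$ for which the escape rate $\rho(A,\varphi)$ exists, is continuous with respect to the supremum norm $\|\cdot\|_\infty$.
   Context: A ceiling function is a measurable $\varphi:X\to\mathbb{R}$ with $\inf\varphi>0$. $S_n\varphi=\sum_{k=0}^{n-1}\varphi\circ\theta^k$, $N_t^\varphi(x)=\min\{n\in\mathbb{N}_0:S_n\varphi(x)>t\}$. Special flow over $\theta$ under $\varphi$: $\overline{X}_\varphi=\{(x,s):0\le s<\varphi(x)\}$, $\overline{\mu}_\varphi$ the restriction of $\mu\otimes$Lebesgue, $\Phi^\varphi_t(x,s)=(x,s+t)$ if $t<\varphi(x)-s$, else $(\theta^{N-1}x,s+t-S_{N-1}\varphi(x))$ with $N=N^\varphi_{s+t}(x)$. A hole $A\subset X$ is a measurable set with $\bigcup_{n\ge0}\theta^{-n}(A)=X$ a.e. The escape rate $\rho(A,\varphi)$ is $\lim_{t\to\infty}-\frac1t\log\overline{\mu}_\varphi(\{(x,s):\forall\tau\in[0,t]:\Phi^\varphi_\tau(x,s)\notin A\times\mathbb{R}\})$ when the limit exists. *)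

From HB Require Import structures.
From mathcomp Require Import all_boot all_order all_algebra.
From mathcomp Require Import all_classical all_reals all_analysis.
Set Implicit Arguments. Unset Strict Implicit. Unset Printing Implicit Defensive.
Import Order.TTheory GRing.Theory Num.Theory.
Import numFieldNormedType.Exports.
Local Open Scope classical_set_scope.
Local Open Scope ring_scope.

Section SpecialFlow.
Context d (X : measurableType d) (R : realType).
Implicit Types (theta : X -> X) (phi : X -> R) (A : set X).

Definition measure_preserving (mu : {measure set X -> \bar R}) theta :=
  measurable_fun setT theta /\
  forall B : set X, measurable B -> mu (theta @^-1` B) = mu B.

Definition is_hole (mu : {measure set X -> \bar R}) theta A :=
  measurable A /\
  mu.-negligible (~` \bigcup_n ((iter n theta) @^-1` A)).

Definition ceiling_function phi :=
  measurable_fun setT phi /\ 0 < inf (range phi).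


Definition birkhoff_sum theta phi (n : nat) (x : X) : R :=
  \sum_(k < n) phi (iter k theta x).

(* N_t^phi(x) = min {n : S_n phi(x) > t}  (0 if no such n, which never
   happens for a ceiling function) *)
Definition Nt theta phi (t : R) (x : X) : nat :=
  match pselect (exists n : nat, t < birkhoff_sum theta phi n x) with
  | left h => ex_minn h
  | right _ => 0%N
  end.

Definition special_flow theta phi (t : R) (p : X * R) : X * R :=
  let x := p.1 in let s := p.2 in
  if t < phi x - s then (x, s + t)
  else let N := Nt theta phi (s + t) x in
       (iter N.-1 theta x, s + t - birkhoff_sum theta phi N.-1 x).

Definition suspension phi : set (X * R) :=
  [set p | 0 <= p.2 /\ p.2 < phi p.1].

Definition susp_measure (mu : {measure set X -> \bar R}) phi
    (S : set (X * R)) : \bar R :=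
  ((mu \x (@lebesgue_measure R)) (suspension phi `&` S))%E.

Definition survivor theta phi A (t : R) : set (X * R) :=
  [set p | suspension phi p /\
           forall tau : R, 0 <= tau <= t -> ~ A (special_flow theta phi tau p).1].

Definition escape_rate_is (mu : {measure set X -> \bar R}) theta A phi
    (r : R) : Prop :=
  (\forall t \near +oo%R,
      (0 < susp_measure mu phi (survivor theta phi A t))%E) /\
  (fun t : R => - (t^-1 * ln (fine (susp_measure mu phi (survivor theta phi A t)))))
     @ +oo%R --> r.

End SpecialFlow.

From HB Require Import structures.
From mathcomp Require Import all_boot all_order all_algebra.
From mathcomp Require Import all_classical all_reals all_analysis.
From mathcomp Require Import lra.
Import Order.TTheory GRing.Theory Num.Theory.
Import numFieldNormedType.Exports.
Local Open Scope classical_set_scope.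
Local Open Scope ring_scope.
Set Implicit Arguments. Unset Strict Implicit.

(* If [k * phi <= psi] pointwise with [k > 0], every return time
   [S_n phi x] of a point [x] to the hole is at most [S_n psi x / k]; hence if
   [(x, s)] survives up to time [t] under the flow over [phi], then [(x, y)]
   survives up to time [k t] under the flow over [psi] for every [y <= k s].
   The fibres of the survivor sets are intervals starting at [0], so comparing
   them fibrewise and integrating gives
   [k * mu_phi(survivors at t) <= mu_psi(survivors at k t)], and taking
   [-(1/t) log] yields [k * rho(A, psi) <= rho(A, phi)].  A uniformly small
   perturbation [psi] of [phi] satisfies [(1 - e) phi <= psi <= (1 + e) phi]
   with [e] small because [inf phi > 0], and the two resulting comparisons
   squeeze [rho(A, psi)] towards [rho(A, phi)]. *)
Section LebesgueScale.
Context (R : realType).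
Local Notation lambda := (@lebesgue_measure R).
Implicit Types S T : set R.

Lemma lebesgue_measure_le_bound S M : measurable S -> 0 <= M ->
  S `<=` `[0, M] -> (lambda S <= M%:E)%E.
Proof.
move=> mS M0 SM; have : (lambda S <= lambda `[0%R, M])%E.
  by apply: le_measure; rewrite ?inE; [exact: mS|exact: measurable_itv|].
move/le_trans; apply.
by rewrite lebesgue_measure_itv /= lte_fin; case: ltP => _; rewrite ?oppr0 ?adde0.
Qed.

Lemma lebesgue_measure_le_sup S : measurable S -> S `<=` `[0, +oo[ ->
  has_ubound S -> (lambda S <= (sup S)%:E)%E.
Proof.
move=> mS S0 ubS.
have [->|/set0P[s Ss]] := eqVneq S set0; first by rewrite measure0 sup0.
have supS : has_sup S by split; [exists s|].
have S_ge0 y : S y -> 0 <= y by move/S0; rewrite /= in_itv /= andbT.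
apply: lebesgue_measure_le_bound => //.
  exact: le_trans (S_ge0 _ Ss) (sup_upper_bound supS Ss).
by move=> y Sy; rewrite /= in_itv /= S_ge0 //; exact: sup_upper_bound.
Qed.

Lemma lebesgue_measure_scale_le S T k : 0 < k -> measurable S -> measurable T ->
  S `<=` `[0, +oo[ -> has_ubound S ->
  (forall s y, S s -> 0 <= y <= k * s -> T y) -> (k%:E * lambda S <= lambda T)%E.
Proof.
move=> k0 mS mT S0 ubS scaleST.
have [->|/set0P[s Ss]] := eqVneq S set0; first by rewrite measure0 mule0.
have supS : has_sup S by split; [exists s|].
have itvT : `[0, k * sup S[ `<=` T.
  move=> y; rewrite /= in_itv /= => /andP[y0 ylt].
  have eps0 : 0 < sup S - y / k by rewrite subr_gt0 ltr_pdivrMr // mulrC.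
  have [e Se] := sup_adherent eps0 supS.
  rewrite opprB addrCA subrr addr0 ltr_pdivrMr // mulrC => /ltW yle.
  by apply: (scaleST e); rewrite ?y0.
have : (lambda `[0%R, (k * sup S)%R[ <= lambda T)%E.
  by apply: le_measure; rewrite ?inE; [exact: measurable_itv|exact: mT|].
have kS : (k%:E * lambda S <= (k * sup S)%:E)%E.
  rewrite EFinM; apply: lee_wpmul2l; first by rewrite lee_fin ltW.
  exact: lebesgue_measure_le_sup.
rewrite lebesgue_measure_itv /= lte_fin => itv_le; apply: le_trans kS _; move: itv_le.
case: ltP => [_|ksup_le0 _]; first by rewrite oppr0 adde0.
by apply: le_trans (measure_ge0 _ _); rewrite lee_fin.
Qed.

End LebesgueScale.

Section NonnegIntegral.
Context d (T : measurableType d) (R : realType) (mu : {measure set T -> \bar R}).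
Local Open Scope ereal_scope.
Implicit Types f g : T -> \bar R.

(* The integrands below are not known to be measurable; for nonnegative
   functions the integral is still the supremum of the integrals of the
   simple functions below them, which is all these two lemmas use. *)
Lemma ge0_le_integral_nonmeas f g : (forall x, 0 <= f x) ->
  (forall x, f x <= g x) -> \int[mu]_x f x <= \int[mu]_x g x.
Proof.
move=> f0 fg; have g0 x : 0 <= g x := le_trans (f0 x) (fg x).
rewrite (ge0_integralTE mu f0) (ge0_integralTE mu g0).
apply: ge_ereal_sup => _ [h hf <-]; apply: ereal_sup_ubound => /=.
by exists h => // x; exact: le_trans (hf x) (fg x).
Qed.

Lemma ge0_integralZl_le_nonmeas (k : R) f : (0 < k)%R -> (forall x, 0 <= f x) ->
  k%:E * \int[mu]_x f x <= \int[mu]_x (k%:E * f x).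
Proof.
move=> k0 f0; have kf0 x : 0 <= k%:E * f x by rewrite mule_ge0 // lee_fin ltW.
rewrite (ge0_integralTE mu f0) (ge0_integralTE mu kf0) -ereal_sup_pZl //.
apply: ge_ereal_sup => _ [_ [h hf <-] <-]; apply: ereal_sup_ubound => /=.
exists (scale_nnsfun h (ltW k0)); last exact: sintegralrM.
move=> x /=; rewrite EFinM; apply: lee_wpmul2l; last exact: hf.
by rewrite lee_fin; exact: ltW.
Qed.

End NonnegIntegral.

Lemma neg_log_rate_scale_le (R : realType) (k t a b : R) :
  0 < k -> 0 < t -> 0 < a -> k * a <= b ->
  k * - ((k * t)^-1 * ln b) <= - (t^-1 * ln a) - t^-1 * ln k.
Proof.
move=> k0 t0 a0 kab; have b0 : 0 < b by apply: lt_le_trans kab; rewrite mulr_gt0.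
have ln_kab : ln k + ln a <= ln b by rewrite -lnM ?posrE // ler_ln ?posrE ?mulr_gt0.
rewrite invfM mulrN !mulrA mulfV ?gt_eqF // mul1r -opprD -mulrDr lerN2.
by rewrite addrC ler_wpM2l // invr_ge0 ltW.
Qed.

Lemma close_scale_bounds (R : realFieldType) (a b c e : R) : 0 <= e -> c <= a ->
  `|a - b| <= c * e -> (1 - e) * a <= b /\ (1 + e)^-1 * b <= a.
Proof.
move=> e0 ca; rewrite ler_norml => /andP[ab ba].
have ce : c * e <= a * e by rewrite ler_wpM2r.
split; first lra.
rewrite ler_pdivrMl; lra.
Qed.

Lemma dist_le_of_scale_bounds (R : realFieldType) (e r r' : R) :
  0 < e -> e <= 1 / 2 -> (1 - e) * r' <= r -> (1 + e)^-1 * r <= r' ->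
  `|r - r'| <= 2 * e * `|r|.
Proof.
move=> e0 e_le lo hi; rewrite ler_pdivrMl in hi; last lra.
have er'0 : 0 <= e * r' by lra.
have r'0 : 0 <= r' by rewrite -(pmulr_rge0 _ e0).
have r0 : 0 <= r by nra.
rewrite (ger0_norm r0) ler_norml; apply/andP; split; nra.
Qed.

Lemma exists_small_factor (R : realFieldType) (r eps : R) : 0 < eps ->
  exists e, [/\ 0 < e, e <= 1 / 2 & 2 * e * `|r| < eps].
Proof.
move=> eps_gt0; set e := Num.min (1 / 2) (eps / (2 * (`|r| + 1))).
have e_gt0 : 0 < e by rewrite lt_min divr_gt0 ?mulr_gt0 ?ltr_wpDl.
have : e <= eps / (2 * (`|r| + 1)) by rewrite ge_min lexx orbT.
rewrite ler_pdivlMr ?mulr_gt0 ?ltr_wpDl // => e_eps.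
by exists e; split=> //; [rewrite ge_min lexx|nra].
Qed.

Section BirkhoffSum.
Context d (X : measurableType d) (R : realType) (theta : X -> X).
Implicit Types (f g : X -> R) (x : X).

Lemma birkhoff_sum0 f x : birkhoff_sum theta f 0 x = 0.
Proof. by rewrite /birkhoff_sum big_ord0. Qed.

Lemma birkhoff_sumS f n x :
  birkhoff_sum theta f n.+1 x = birkhoff_sum theta f n x + f (iter n theta x).
Proof. by rewrite /birkhoff_sum big_ord_recr. Qed.

Lemma birkhoff_sum1 f x : birkhoff_sum theta f 1 x = f x.
Proof. by rewrite birkhoff_sumS birkhoff_sum0 add0r. Qed.

Lemma birkhoff_sum_lt f : (forall x, 0 < f x) ->
  forall x m n, (m < n)%N -> birkhoff_sum theta f m x < birkhoff_sum theta f n x.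
Proof.
move=> fpos x m; elim=> [//|n IH]; rewrite ltnS leq_eqVlt birkhoff_sumS.
case/orP=> [/eqP->|/IH mn]; first by rewrite ltrDl.
by rewrite (lt_trans mn) ?ltrDl.
Qed.

Lemma birkhoff_sum_le f : (forall x, 0 < f x) ->
  forall x m n, (m <= n)%N -> birkhoff_sum theta f m x <= birkhoff_sum theta f n x.
Proof.
move=> fpos x m n; rewrite leq_eqVlt => /orP[/eqP->//|mn].
exact/ltW/birkhoff_sum_lt.
Qed.

Lemma birkhoff_sum_scale_le f g k : 0 <= k -> (forall x, k * f x <= g x) ->
  forall x n, k * birkhoff_sum theta f n x <= birkhoff_sum theta g n x.
Proof.
move=> k0 kfg x; elim=> [|n IH]; first by rewrite !birkhoff_sum0 mulr0.
by rewrite !birkhoff_sumS mulrDr lerD.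
Qed.

End BirkhoffSum.

Section SpecialFlow.
Context d (X : measurableType d) (R : realType) (theta : X -> X) (A : set X).
Variable f : X -> R.
Hypothesis fpos : forall x, 0 < f x.

Lemma special_flow_fst_iter x s tau : 0 <= s + tau ->
  exists n, (special_flow theta f tau (x, s)).1 = iter n theta x /\
            birkhoff_sum theta f n x <= s + tau.
Proof.
move=> stau0; rewrite /special_flow /=.
case: ifP => _; first by exists 0%N; rewrite birkhoff_sum0.
rewrite /Nt; case: pselect => [ex|_] /=; last by exists 0%N; rewrite birkhoff_sum0.
case: ex_minnP => -[|m] _ minm /=; first by exists 0%N; rewrite birkhoff_sum0.
by exists m; split => //; rewrite leNgt; apply/negP => /minm; rewrite ltnn.
Qed.

Lemma special_flow_return x s n : 0 <= s -> s < f x -> (0 < n)%N ->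
  (special_flow theta f (birkhoff_sum theta f n x - s) (x, s)).1 = iter n theta x.
Proof.
move=> s0 sf n0; rewrite /special_flow /= ltrD2r.
have -> : birkhoff_sum theta f n x < f x = false.
  by apply/negbTE; rewrite -leNgt -(birkhoff_sum1 theta) birkhoff_sum_le.
rewrite addrC subrK /Nt; case: pselect => [ex|[]]; last first.
  by exists n.+1; exact: birkhoff_sum_lt.
case: ex_minnP => m Sm minm /=.
suff -> : m = n.+1 by [].
apply/eqP; rewrite eqn_leq minm ?birkhoff_sum_lt //=.
by rewrite ltnNge; apply/negP => /(birkhoff_sum_le theta fpos x); rewrite leNgt Sm.
Qed.

Lemma survivorP t x s : 0 <= t -> 0 <= s -> s < f x ->
  (forall tau, 0 <= tau <= t -> ~ A (special_flow theta f tau (x, s)).1) <->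
  (forall n, A (iter n theta x) -> s + t < birkhoff_sum theta f n x).
Proof.
move=> t0 s0 sf; split=> [avoid n An|returns tau /andP[tau0 taut]].
- rewrite ltNge; apply/negP => Sn_le.
  case: n An Sn_le => [|n] An Sn_le.
    by apply: (avoid 0); rewrite ?lexx ?t0 // /special_flow /= subr_gt0 sf.
  have fS : f x <= birkhoff_sum theta f n.+1 x.
    by rewrite -(birkhoff_sum1 theta) birkhoff_sum_le.
  apply: (avoid (birkhoff_sum theta f n.+1 x - s)).
    by apply/andP; split; lra.
  by rewrite special_flow_return.
- have [n [-> Sn]] := special_flow_fst_iter x (addr_ge0 s0 tau0).
  by move=> /returns; lra.
Qed.

End SpecialFlow.

Section SurvivorSection.
Context d (X : measurableType d) (R : realType) (theta : X -> X) (A : set X).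
Implicit Types (f g : X -> R) (x : X).

Definition survivor_section f t x : set R :=
  [set s | (0 <= s /\ s < f x) /\
           forall n, A (iter n theta x) -> s + t < birkhoff_sum theta f n x].

Lemma xsection_survivor f t x : (forall x, 0 < f x) -> 0 <= t ->
  xsection (suspension f `&` survivor theta f A t) x = survivor_section f t x.
Proof.
move=> fpos t0; apply/seteqP; split=> s; rewrite /xsection /= inE /=.
  by move=> [[s0 sf] [_ avoid]]; split=> //; exact/(survivorP theta A fpos).
by move=> [[s0 sf] returns]; do !split=> //; exact/(survivorP theta A fpos).
Qed.

Lemma measurable_survivor_section f t x : measurable (survivor_section f t x).
Proof.
have -> : survivor_section f t x = `[0, f x[ `&` \bigcap_n
    [set s | A (iter n theta x) -> s < birkhoff_sum theta f n x - t].
  apply/seteqP; split=> s /=; rewrite in_itv /=.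
    move=> [[s0 sf] returns]; split=> [|n _ An]; first by rewrite s0 sf.
    by rewrite ltrBrDr; exact: returns.
  move=> [/andP[s0 sf] returns]; split=> // n An.
  by rewrite -ltrBrDr; exact: returns.
apply: measurableI; first exact: measurable_itv.
apply: bigcapT_measurable => n; have [An|nAn] := pselect (A (iter n theta x)).
  have -> : [set s | A (iter n theta x) -> s < birkhoff_sum theta f n x - t] =
            `]-oo, birkhoff_sum theta f n x - t[%classic.
    by apply/seteqP; split=> s /=; rewrite in_itv /=; [apply|move=> ? ?].
  exact: measurable_itv.
have -> : [set s | A (iter n theta x) -> s < birkhoff_sum theta f n x - t] = setT.
  by apply/seteqP; split=> s // _ /nAn.
exact: measurableT.
Qed.

Lemma survivor_section_ge0 f t x : survivor_section f t x `<=` `[0, +oo[.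
Proof. by move=> s [[s0 _] _]; rewrite /= in_itv /= s0. Qed.

Lemma has_ubound_survivor_section f t x : has_ubound (survivor_section f t x).
Proof. by exists (f x) => s [[_ /ltW]]. Qed.

Lemma survivor_section_scale f g k t x s y : 0 < k ->
  (forall x, k * f x <= g x) -> survivor_section f t x s -> 0 <= y <= k * s ->
  survivor_section g (k * t) x y.
Proof.
move=> k0 kfg [[s0 sf] returns] /andP[y0 yks]; split.
  by split=> //; apply: le_lt_trans yks (lt_le_trans _ (kfg x)); rewrite ltr_pM2l.
move=> n /returns st; apply: lt_le_trans (birkhoff_sum_scale_le theta (ltW k0) kfg x n).
by have := ltr_pM2l k0 (s + t) (birkhoff_sum theta f n x); rewrite st mulrDr; lra.
Qed.

Lemma survivor_section_measure_scale f g k t x : 0 < k ->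
  (forall x, k * f x <= g x) ->
  (k%:E * lebesgue_measure (survivor_section f t x) <=
   lebesgue_measure (survivor_section g (k * t) x))%E.
Proof.
move=> k0 kfg; apply: lebesgue_measure_scale_le => //.
- exact: measurable_survivor_section.
- exact: measurable_survivor_section.
- exact: survivor_section_ge0.
- exact: has_ubound_survivor_section.
- by move=> s y; exact: survivor_section_scale.
Qed.

End SurvivorSection.

Section EscapeRate.
Context d (X : measurableType d) (R : realType).
Variables (mu : probability X R) (theta : X -> X) (A : set X).
Implicit Types f g : X -> R.

Lemma susp_measure_survivorE f t : (forall x, 0 < f x) -> 0 <= t ->
  susp_measure mu f (survivor theta f A t) =
  (\int[mu]_x lebesgue_measure (survivor_section theta A f t x))%E.
Proof.
by move=> fpos t0; apply: eq_integral => x _; rewrite /= xsection_survivor.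
Qed.

Lemma susp_measure_survivor_scale f g k t :
  (forall x, 0 < f x) -> (forall x, 0 < g x) -> 0 < k ->
  (forall x, k * f x <= g x) -> 0 <= t ->
  (k%:E * susp_measure mu f (survivor theta f A t) <=
   susp_measure mu g (survivor theta g A (k * t)))%E.
Proof.
move=> fpos gpos k0 kfg t0.
rewrite !susp_measure_survivorE ?mulr_ge0 ?(ltW k0) //.
apply: le_trans (ge0_integralZl_le_nonmeas _ k0 _) _ => //.
apply: ge0_le_integral_nonmeas => x; first by rewrite mule_ge0 // lee_fin ltW.
exact: survivor_section_measure_scale.
Qed.

Lemma susp_measure_survivor_fin_num f M t : (forall x, 0 < f x) ->
  (forall x, f x <= M) -> 0 <= t ->
  susp_measure mu f (survivor theta f A t) \is a fin_num.
Proof.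
move=> fpos fM t0; rewrite ge0_fin_numE ?measure_ge0 //.
have M0 : 0 <= M by apply: le_trans (fM point); exact/ltW.
apply: le_lt_trans (ltry M); rewrite susp_measure_survivorE //.
apply: (@le_trans _ _ (\int[mu]_x (cst M%:E x))%E).
  apply: ge0_le_integral_nonmeas => // x; apply: lebesgue_measure_le_bound => //.
    exact: measurable_survivor_section.
  by move=> s [[s0 sf] _]; rewrite /= in_itv /= s0 (le_trans (ltW sf)).
rewrite integral_cst //; set m := (X in (M%:E * X)%E).
have -> : m = 1%E by exact: probability_setT.
by rewrite mule1.
Qed.

Lemma escape_rate_scale_le (f g : X -> R) k rf rg Mf Mg :
  (forall x, 0 < f x) -> (forall x, 0 < g x) -> 0 < k ->
  (forall x, k * f x <= g x) -> (forall x, f x <= Mf) -> (forall x, g x <= Mg) ->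
  escape_rate_is mu theta A f rf -> escape_rate_is mu theta A g rg ->
  k * rg <= rf.
Proof.
move=> fpos gpos k0 kfg fM gM [Ff_gt0 rate_f] [_ rate_g].
set Lf := (fun t => _) in rate_f; set Lg := (fun t => _) in rate_g.
have k_oo : (fun t : R => k * t) @ +oo --> +oo.
  apply/cvgryPge => B; exists (B / k); split=> [|t]; first exact: num_real.
  by move=> /ltW; rewrite ler_pdivrMr // mulrC.
have lnk_over_t : (fun t : R => t^-1 * ln k) @ +oo --> 0.
  have inv_t : (fun t : R => t^-1) @ +oo --> 0.
    by apply/(gtr0_cvgV0 (f := id)); [exact: nbhs_pinfty_gt|exact: cvg_id].
  by rewrite -(mul0r (ln k)); apply: cvgM inv_t (cvg_cst _).
apply: (ler_cvg_to (cvgM (cvg_cst k) (cvg_comp _ _ k_oo rate_g))).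
  rewrite -[rf]subr0; exact: cvgB rate_f lnk_over_t.
near=> t.
have t_gt0 : 0 < t by near: t; exact: nbhs_pinfty_gt.
have Ff_fin := susp_measure_survivor_fin_num fpos fM (ltW t_gt0).
have Fg_fin := susp_measure_survivor_fin_num gpos gM
  (mulr_ge0 (ltW k0) (ltW t_gt0)).
have Ffg := susp_measure_survivor_scale fpos gpos k0 kfg (ltW t_gt0).
rewrite /Lf /Lg /=; apply: neg_log_rate_scale_le => //.
  apply: fine_gt0; rewrite ltey_eq Ff_fin andbT.
  by near: t; exact: Ff_gt0.
by move: Ffg; rewrite -(fineK Ff_fin) -(fineK Fg_fin) -EFinM lee_fin.
Unshelve. all: by end_near.
Qed.

End EscapeRate.

Theorem proposition3p12 (d : measure_display) (X : measurableType d)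
  (R : realType) (mu : probability X R) (theta : X -> X) (A : set X) :
  measure_preserving mu theta ->
  is_hole mu theta A ->
  forall (phi : X -> R) (r : R),
    ceiling_function phi -> bounded_fun phi ->
    escape_rate_is mu theta A phi r ->
    forall eps : R, 0 < eps ->
    exists2 delta : R, 0 < delta &
      forall (psi : X -> R) (r' : R),
        ceiling_function psi -> bounded_fun psi ->
        escape_rate_is mu theta A psi r' ->
        (forall x, `|phi x - psi x| <= delta) ->
        `|r - r'| < eps.
Proof.
move=> _ _ phi r [_ inf_gt0] bphi rate_phi eps eps_gt0.
set c := inf (range phi) in inf_gt0.
have c_le x : c <= phi x by apply: ge_inf; [exact: bounded_fun_has_lbound|exists x].
have phi_gt0 x : 0 < phi x := lt_le_trans inf_gt0 (c_le x).
have [M phi_le] := bounded_fun_has_ubound bphi.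
have [e [e_gt0 e_le e_eps]] := exists_small_factor r eps_gt0.
exists (c * e) => [|psi r' _ bpsi rate_psi close]; first exact: mulr_gt0.
have [M' psi_le] := bounded_fun_has_ubound bpsi.
have bounds x := close_scale_bounds (ltW e_gt0) (c_le x) (close x).
have psi_gt0 x : 0 < psi x.
  by apply: lt_le_trans (bounds x).1; rewrite mulr_gt0 //; lra.
apply: le_lt_trans (dist_le_of_scale_bounds e_gt0 e_le _ _) e_eps.
- apply: (escape_rate_scale_le phi_gt0 psi_gt0 _ (fun x => (bounds x).1)
    (fun x => phi_le _ (imageT _ x)) (fun x => psi_le _ (imageT _ x)) rate_phi rate_psi).
  lra.
- apply: (escape_rate_scale_le psi_gt0 phi_gt0 _ (fun x => (bounds x).2)
    (fun x => psi_le _ (imageT _ x)) (fun x => phi_le _ (imageT _ x)) rate_psi rate_phi).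
  by rewrite invr_gt0; lra.
Qed.
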